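(* Let $X$ be a compact metric space with metric $d$. If a homeomorphism $f\colon X\to X$ has the contractive shadowing property, then $X$ is a finite set.
   Context: For $\delta>0$, a sequence $(x_i)_{i\ge0}$ is a $\delta$-pseudo orbit of $f$ if $d(f(x_i),x_{i+1})\le\delta$ for all $i\ge0$; it is $\epsilon$-shadowed by $x$ if $d(f^i(x),x_i)\le\epsilon$ for all $i\ge0$. For $L>0$, $f$ has the $L$-Lipschitz shadowing property if there is $\delta_0>0$ such that for every $0<\delta\le\delta_0$, every $\delta$-pseudo orbit of $f$ is $L\delta$-shadowed by some point of $X$. $f$ has the contractive shadowing property if it has the $L$-Lipschitz shadowing property for some $0<L<1$. *)

From Stdlib Require Import Reals List.
Open Scope R_scope.

Record is_metric {X : Type} (d : X -> X -> R) : Prop := {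
  metric_nonneg : forall x y, 0 <= d x y;
  metric_eq0 : forall x y, d x y = 0 <-> x = y;
  metric_sym : forall x y, d x y = d y x;
  metric_triangle : forall x y z, d x z <= d x y + d y z
}.

Definition metric_open {X : Type} (d : X -> X -> R) (U : X -> Prop) : Prop :=
  forall x, U x -> exists r, 0 < r /\ forall y, d x y < r -> U y.

Definition metric_compact {X : Type} (d : X -> X -> R) : Prop :=
  forall (I : Type) (U : I -> X -> Prop),
    (forall i, metric_open d (U i)) ->
    (forall x, exists i, U i x) ->
    exists l : list I, forall x, exists i, In i l /\ U i x.

Definition metric_continuous {X : Type} (d : X -> X -> R) (f : X -> X) : Prop :=
  forall x eps, 0 < eps -> exists delta, 0 < delta /\
    forall y, d x y < delta -> d (f x) (f y) < eps.

Definition homeomorphism {X : Type} (d : X -> X -> R) (f : X -> X) : Prop :=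
  metric_continuous d f /\
  exists g : X -> X, (forall x, g (f x) = x) /\ (forall y, f (g y) = y) /\
    metric_continuous d g.

Definition pseudo_orbit {X : Type} (d : X -> X -> R) (f : X -> X)
    (delta : R) (xs : nat -> X) : Prop :=
  forall i, d (f (xs i)) (xs (S i)) <= delta.

Definition shadows {X : Type} (d : X -> X -> R) (f : X -> X)
    (eps : R) (x : X) (xs : nat -> X) : Prop :=
  forall i, d (Nat.iter i f x) (xs i) <= eps.

Definition lipschitz_shadowing {X : Type} (d : X -> X -> R) (f : X -> X)
    (L : R) : Prop :=
  exists delta0, 0 < delta0 /\
    forall delta, 0 < delta -> delta <= delta0 ->
      forall xs, pseudo_orbit d f delta xs ->
        exists x, shadows d f (L * delta) x xs.

Definition contractive_shadowing {X : Type} (d : X -> X -> R) (f : X -> X) : Prop :=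
  exists L, 0 < L /\ L < 1 /\ lipschitz_shadowing d f L.

Definition finite_type (X : Type) : Prop :=
  exists l : list X, forall x, In x l.

(* Contractive shadowing makes orbits separate at a geometric rate: if
   d(f^N x, f^N y) <= delta <= delta0 then d(x, y) <= delta L^N / (1 - L).
   Splicing the orbit of x with that of y at time N gives a delta-pseudo orbit;
   shadowing it and splicing the shadow back between the two orbits moves the jump
   one step outwards on each side while multiplying its size by L.  After N - 1 rounds
   this yields a point z with d(x, z) <= L^N delta whose orbit is L^N delta-close to
   that of y from some time J on.  Repeating the one-jump splice at the fixed time J
   produces a Cauchy sequence starting at z; by compactness it has a limit, which has
   the same f^J-image as y by continuity, hence is y because f is injective.
   So distinct points eventually have images more than delta0 apart: under a high
   iterate, distinct points of any finite set land in distinct balls of a fixed finite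
   cover of X by balls of radius delta0/2, which bounds the number of points of X. *)

From Stdlib Require Import Reals List Lra Lia Classical ClassicalEpsilon.
Open Scope R_scope.

Lemma pow_le_one (q : R) (n : nat) : 0 <= q <= 1 -> q ^ n <= 1.
Proof. intros Hq. rewrite <- (pow1 n). apply pow_incr. lra. Qed.

Lemma geometric_eventually_lt (C q eta : R) :
  0 <= q < 1 -> 0 < eta -> exists N, forall n, (N <= n)%nat -> C * q ^ n < eta.
Proof.
  intros Hq Heta.
  destruct (Rle_lt_dec C 0) as [HC | HC].
  - exists 0%nat. intros n _. pose proof (pow_le q n (proj1 Hq)). nra.
  - assert (Habs : Rabs q < 1) by (rewrite Rabs_right; lra).
    destruct (pow_lt_1_zero q Habs (eta / C)) as [N HN]; [apply Rdiv_lt_0_compat; lra |].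
    exists N. intros n Hn. specialize (HN n Hn).
    rewrite Rabs_right in HN by (apply Rle_ge, pow_le; lra).
    apply Rmult_lt_compat_l with (r := C) in HN; [| lra].
    replace (C * (eta / C)) with eta in HN by (field; lra). exact HN.
Qed.

Lemma eventually_forall_in {A : Type} (P : A -> nat -> Prop) (l : list A) :
  (forall a, In a l -> exists N, forall n, (N <= n)%nat -> P a n) ->
  exists N, forall n, (N <= n)%nat -> forall a, In a l -> P a n.
Proof.
  induction l as [| b l IH]; intros H.
  - exists 0%nat. intros n _ a [].
  - destruct (H b (or_introl eq_refl)) as [N1 H1].
    destruct IH as [N2 H2]; [intros a Ha; apply H; right; exact Ha |].
    exists (Nat.max N1 N2). intros n Hn a [<- | Ha].
    + apply H1. lia.
    + apply H2; [lia | exact Ha].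
Qed.

Lemma dependent_choice {A : Type} (P : nat -> A -> Prop) (R : nat -> A -> A -> Prop) (a : A) :
  P 0%nat a -> (forall k w, P k w -> exists w', R k w w' /\ P (S k) w') ->
  exists u : nat -> A, u 0%nat = a /\ forall k, P k (u k) /\ R k (u k) (u (S k)).
Proof.
  intros Ha Hstep.
  assert (step : forall k (w : {w | P k w}), {w' | R k (proj1_sig w) w' /\ P (S k) w'}).
  { intros k [w Hw]. apply constructive_indefinite_description. exact (Hstep k w Hw). }
  pose (v := fix v (k : nat) : {w | P k w} :=
    match k as k return {w | P k w} with
    | O => exist _ a Ha
    | S k => exist _ (proj1_sig (step k (v k))) (proj2 (proj2_sig (step k (v k))))
    end).
  exists (fun k => proj1_sig (v k)). split; [reflexivity |].
  intro k. exact (conj (proj2_sig (v k)) (proj1 (proj2_sig (step k (v k))))).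
Qed.

Lemma iter_injective {X : Type} (f : X -> X) :
  (forall a b, f a = f b -> a = b) ->
  forall J a b, Nat.iter J f a = Nat.iter J f b -> a = b.
Proof.
  intros Hf J. induction J as [| J IH]; simpl; intros a b H; [exact H |].
  apply IH, Hf, H.
Qed.

Definition orbit {X : Type} (f : X -> X) (x : X) (i : nat) : X := Nat.iter i f x.

Definition splice {A : Type} (m : nat) (xs ys : nat -> A) (i : nat) : A :=
  if (i <=? m)%nat then xs i else ys i.

Lemma splice_le {A : Type} (m : nat) (xs ys : nat -> A) (i : nat) :
  (i <= m)%nat -> splice m xs ys i = xs i.
Proof. intros H. unfold splice. destruct (Nat.leb_spec i m); [reflexivity | lia]. Qed.

Lemma splice_gt {A : Type} (m : nat) (xs ys : nat -> A) (i : nat) :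
  (m < i)%nat -> splice m xs ys i = ys i.
Proof. intros H. unfold splice. destruct (Nat.leb_spec i m); [lia | reflexivity]. Qed.

Section Metric.
Context {X : Type} (d : X -> X -> R) (hd : is_metric d).

Lemma dist_refl (x : X) : d x x = 0.
Proof. apply (metric_eq0 d hd). reflexivity. Qed.

Lemma dist_pos (x y : X) : x <> y -> 0 < d x y.
Proof.
  intros Hxy. destruct (metric_nonneg d hd x y) as [H | H]; [exact H |].
  exfalso. apply Hxy, (metric_eq0 d hd). symmetry. exact H.
Qed.

Lemma iter_continuous (f : X -> X) :
  metric_continuous d f -> forall J, metric_continuous d (Nat.iter J f).
Proof.
  intros Hf J. induction J as [| J IH]; intros x eps Heps.
  - exists eps. simpl. auto.
  - destruct (Hf (Nat.iter J f x) eps Heps) as [eta [Heta Hfx]].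
    destruct (IH x eta Heta) as [rho [Hrho HJx]].
    exists rho. split; [exact Hrho |]. intros y Hy. apply Hfx, HJx, Hy.
Qed.

Lemma continuous_eq_of_approx (h : X -> X) (w v : X) :
  metric_continuous d h ->
  (forall eta, 0 < eta -> exists u, d w u < eta /\ d (h u) v < eta) -> h w = v.
Proof.
  intros Hh Happ. apply (metric_eq0 d hd).
  apply Rle_antisym; [| apply (metric_nonneg d hd)].
  apply Rnot_lt_le. intro Hpos.
  destruct (Hh w (d (h w) v / 2)) as [rho [Hrho Hcont]]; [lra |].
  destruct (Happ (Rmin rho (d (h w) v / 2))) as [u [Hwu Huv]]; [apply Rmin_glb_lt; lra |].
  pose proof (Hcont u (Rlt_le_trans _ _ _ Hwu (Rmin_l _ _))).
  pose proof (Rmin_r rho (d (h w) v / 2)).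
  pose proof (metric_triangle d hd (h w) (h u) v).
  lra.
Qed.

Hypothesis hcpt : metric_compact d.

Lemma compact_ball_cover (r : R) :
  0 < r -> exists (l : list X) (c : X -> X), forall x, In (c x) l /\ d (c x) x < r.
Proof.
  intros Hr. destruct (hcpt X (fun p x => d p x < r)) as [l Hl].
  - intros p x Hx. exists (r - d p x). split; [lra |].
    intros y Hy. pose proof (metric_triangle d hd p x y). lra.
  - intro x. exists x. rewrite dist_refl. exact Hr.
  - exists l, (fun x => proj1_sig (constructive_indefinite_description _ (Hl x))).
    intro x. destruct (constructive_indefinite_description _ (Hl x)) as [p Hp]. exact Hp.
Qed.

(* Compactness enters through the cover by the open sets
   [{w | d p w < rho}] with [rho <= d (y m) p] for all [m >= k]: a point [w]
   outside every closed ball [d (y k) w <= r k] lies in one of them. *)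
Lemma compact_nested_balls (y : nat -> X) (r : nat -> R) :
  (forall k m, (k <= m)%nat -> d (y k) (y m) <= r k) ->
  exists w, forall k, d (y k) w <= r k.
Proof.
  intros Hy. apply NNPP. intro Hno.
  assert (Hfar : forall w, exists k, r k < d (y k) w).
  { intro w. apply NNPP. intro Hw. apply Hno. exists w. intro k.
    apply Rnot_lt_le. intro Hk. apply Hw. exists k. exact Hk. }
  pose (U := fun (t : X * nat * R) (w : X) => let '(p, k, rho) := t in
    0 < rho /\ (forall m, (k <= m)%nat -> rho <= d (y m) p) /\ d p w < rho).
  destruct (hcpt _ U) as [l Hl].
  - intros [[p k] rho] w (Hrho & Hk & Hw). exists (rho - d p w). split; [lra |].
    intros w' Hw'. repeat split; [exact Hrho | exact Hk |].
    pose proof (metric_triangle d hd p w w'). lra.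
  - intro w. destruct (Hfar w) as [k Hk]. exists (w, k, d (y k) w - r k).
    repeat split; [lra | | rewrite dist_refl; lra].
    intros m Hm. pose proof (Hy k m Hm).
    pose proof (metric_triangle d hd (y k) (y m) w). lra.
  - set (M := list_max (map (fun '(_, k, _) => k) l)).
    destruct (Hl (y M)) as [[[p k] rho] [Ht (_ & Hk & Hp)]].
    assert (HkM : (k <= M)%nat).
    { assert (Hall := proj1 (list_max_le _ M) (le_n M)). rewrite Forall_forall in Hall.
      apply Hall, in_map_iff. exists (p, k, rho). split; [reflexivity | exact Ht]. }
    specialize (Hk M HkM). rewrite (metric_sym d hd) in Hp. lra.
Qed.

Lemma compact_successive_approx (P : nat -> X -> Prop) (e q : R) (a : X) :
  0 <= e -> 0 <= q < 1 -> P 0%nat a ->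
  (forall k w, P k w -> exists w', d w w' <= e * q ^ k /\ P (S k) w') ->
  exists (u : nat -> X) (w : X),
    u 0%nat = a /\ forall k, P k (u k) /\ d (u k) w <= e / (1 - q) * q ^ k.
Proof.
  intros He Hq Ha Hstep.
  destruct (dependent_choice P (fun k w w' => d w w' <= e * q ^ k) a Ha Hstep)
    as [u [Hu0 Hu]].
  pose (r := fun k => e / (1 - q) * q ^ k).
  assert (Hr0 : forall k, 0 <= r k).
  { intro k. apply Rmult_le_pos; [apply Rle_mult_inv_pos; lra | apply pow_le; lra]. }
  assert (Hrstep : forall k, r k - r (S k) = e * q ^ k).
  { intro k. unfold r. simpl. field. lra. }
  assert (Htele : forall k j, d (u k) (u (k + j)%nat) <= r k - r (k + j)%nat).
  { intros k j. induction j as [| j IH].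
    - rewrite Nat.add_0_r, dist_refl. lra.
    - rewrite Nat.add_succ_r.
      pose proof (metric_triangle d hd (u k) (u (k + j)%nat) (u (S (k + j)))).
      pose proof (proj2 (Hu (k + j)%nat)). pose proof (Hrstep (k + j)%nat). lra. }
  destruct (compact_nested_balls u r) as [w Hw].
  { intros k m Hkm. replace m with (k + (m - k))%nat by lia.
    pose proof (Htele k (m - k)%nat). pose proof (Hr0 (k + (m - k))%nat). lra. }
  exists u, w. split; [exact Hu0 |]. intro k. exact (conj (proj1 (Hu k)) (Hw k)).
Qed.

End Metric.

Section ContractiveShadowing.
Context {X : Type} (d : X -> X -> R) (f : X -> X) (L delta0 : R).
Hypotheses (hd : is_metric d) (hcpt : metric_compact d) (hf : metric_continuous d f)
  (hinj : forall a b, f a = f b -> a = b) (hL : 0 < L < 1) (hdelta0 : 0 < delta0).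
Hypothesis hsh : forall delta, 0 < delta -> delta <= delta0 ->
  forall xs, pseudo_orbit d f delta xs -> exists x, shadows d f (L * delta) x xs.

Lemma pseudo_orbit_orbit (eps : R) (x : X) : 0 <= eps -> pseudo_orbit d f eps (orbit f x).
Proof. intros Heps i. unfold orbit. simpl. rewrite (dist_refl d hd). exact Heps. Qed.

Lemma pseudo_orbit_splice (eps : R) (m : nat) (xs ys : nat -> X) :
  pseudo_orbit d f eps xs -> pseudo_orbit d f eps ys ->
  d (f (xs m)) (ys (S m)) <= eps -> pseudo_orbit d f eps (splice m xs ys).
Proof.
  intros Hxs Hys Hm i. unfold splice.
  destruct (Nat.leb_spec i m), (Nat.leb_spec (S i) m).
  - apply Hxs.
  - replace i with m by lia. exact Hm.
  - lia.
  - apply Hys.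
Qed.

Lemma scaled_delta_admissible (k : nat) (delta : R) :
  0 < delta <= delta0 -> 0 < L ^ k * delta <= delta0.
Proof.
  intros Hdelta. assert (0 < L ^ k) by (apply pow_lt; lra).
  assert (L ^ k <= 1) by (apply pow_le_one; lra). split; nra.
Qed.

Lemma shadow_splice_contract (N : nat) (x y : X) (delta : R) :
  0 < delta <= delta0 -> d (Nat.iter N f x) (Nat.iter N f y) <= delta ->
  forall k, (k < N)%nat -> exists z,
    (forall i, (i + k < N)%nat -> d (Nat.iter i f z) (Nat.iter i f x) <= L ^ S k * delta) /\
    (forall i, (N + k <= i)%nat -> d (Nat.iter i f z) (Nat.iter i f y) <= L ^ S k * delta).
Proof.
  intros Hdelta Hxy k. induction k as [| k IH]; intros Hk.
  - assert (Hpo : pseudo_orbit d f delta (splice (N - 1) (orbit f x) (orbit f y))).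
    { apply pseudo_orbit_splice; try apply pseudo_orbit_orbit; try lra.
      unfold orbit. change (f (Nat.iter (N - 1) f x)) with (Nat.iter (S (N - 1)) f x).
      replace (S (N - 1)) with N by lia. exact Hxy. }
    destruct (hsh delta (proj1 Hdelta) (proj2 Hdelta) _ Hpo) as [z Hz].
    exists z. rewrite pow_1. split; intros i Hi; specialize (Hz i).
    + rewrite splice_le in Hz by lia. exact Hz.
    + rewrite splice_gt in Hz by lia. exact Hz.
  - destruct (IH ltac:(lia)) as [z [Hzx Hzy]].
    set (eps := L ^ S k * delta).
    assert (Heps : 0 < eps <= delta0) by (apply scaled_delta_admissible; exact Hdelta).
    assert (Hpo : pseudo_orbit d f eps
      (splice (N - k - 2) (orbit f x) (splice (N + k) (orbit f z) (orbit f y)))).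
    { apply pseudo_orbit_splice; [apply pseudo_orbit_orbit; lra | |].
      - apply pseudo_orbit_splice; try apply pseudo_orbit_orbit; try lra.
        apply (Hzy (S (N + k))). lia.
      - rewrite splice_le by lia. unfold orbit.
        rewrite (metric_sym d hd). apply (Hzx (S (N - k - 2))). lia. }
    destruct (hsh eps (proj1 Heps) (proj2 Heps) _ Hpo) as [z' Hz'].
    exists z'. replace (L ^ S (S k) * delta) with (L * eps) by (unfold eps; simpl; ring).
    split; intros i Hi; specialize (Hz' i).
    + rewrite splice_le in Hz' by lia. exact Hz'.
    + rewrite !splice_gt in Hz' by lia. exact Hz'.
Qed.

Lemma dist_le_of_iter_succ_close (J : nat) (a y : X) (eps : R) :
  0 < eps <= delta0 -> d (Nat.iter (S J) f a) (Nat.iter (S J) f y) <= eps ->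
  d a y <= L * eps / (1 - L).
Proof.
  intros Heps Hay.
  set (P := fun k w => d (Nat.iter (S J) f w) (Nat.iter (S J) f y) <= eps * L ^ k).
  assert (Hstep : forall k w, P k w -> exists w', d w w' <= L * eps * L ^ k /\ P (S k) w').
  { intros k w Hw.
    assert (Hk : 0 < L ^ k * eps <= delta0) by (apply scaled_delta_admissible; exact Heps).
    destruct (shadow_splice_contract (S J) w y (L ^ k * eps) Hk
                ltac:(unfold P in Hw; lra) 0 ltac:(lia)) as [z [Hzw Hzy]].
    exists z. unfold P. rewrite pow_1 in Hzw, Hzy. simpl. split.
    - rewrite (metric_sym d hd). specialize (Hzw 0%nat ltac:(lia)). simpl in Hzw. lra.
    - specialize (Hzy (S J) ltac:(lia)). simpl in Hzy. lra. }
  destruct (compact_successive_approx d hd hcpt P (L * eps) L a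
              ltac:(nra) ltac:(lra) ltac:(unfold P; rewrite pow_O, Rmult_1_r; exact Hay) Hstep)
    as [u [w [Hu0 Hu]]].
  assert (Hw : Nat.iter (S J) f w = Nat.iter (S J) f y).
  { apply (continuous_eq_of_approx d hd); [apply (iter_continuous d); exact hf |].
    intros eta Heta.
    destruct (geometric_eventually_lt (L * eps / (1 - L)) L eta ltac:(lra) Heta) as [N1 H1].
    destruct (geometric_eventually_lt eps L eta ltac:(lra) Heta) as [N2 H2].
    set (k := Nat.max N1 N2).
    exists (u k). destruct (Hu k) as [Hk Huw]. unfold P in Hk.
    rewrite (metric_sym d hd).
    specialize (H1 k ltac:(lia)). specialize (H2 k ltac:(lia)). lra. }
  apply (iter_injective f hinj) in Hw. subst w.
  specialize (Hu 0%nat). rewrite Hu0, pow_O, Rmult_1_r in Hu. lra.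
Qed.

Lemma dist_le_of_iter_close (N : nat) (x y : X) (delta : R) :
  0 < delta <= delta0 -> d (Nat.iter N f x) (Nat.iter N f y) <= delta ->
  d x y <= delta / (1 - L) * L ^ N.
Proof.
  intros Hdelta Hxy. destruct N as [| n].
  - simpl in Hxy. rewrite pow_O.
    replace (delta / (1 - L) * 1) with (delta + delta * L / (1 - L)) by (field; lra).
    assert (0 <= delta * L / (1 - L)) by (apply Rle_mult_inv_pos; nra).
    lra.
  - destruct (shadow_splice_contract (S n) x y delta Hdelta Hxy n ltac:(lia))
      as [z [Hzx Hzy]].
    specialize (Hzx 0%nat ltac:(lia)). specialize (Hzy (S n + n)%nat ltac:(lia)).
    change (d z x <= L ^ S n * delta) in Hzx.
    pose proof (dist_le_of_iter_succ_close (n + n) z y (L ^ S n * delta)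
                  (scaled_delta_admissible (S n) delta Hdelta) Hzy) as Hzy'.
    pose proof (metric_triangle d hd x z y) as Hxzy. rewrite (metric_sym d hd x z) in Hxzy.
    replace (delta / (1 - L) * L ^ S n)
      with (L ^ S n * delta + L * (L ^ S n * delta) / (1 - L)) by (field; lra).
    lra.
Qed.

Lemma iter_dist_eventually_gt (x y : X) :
  x <> y -> exists N, forall n, (N <= n)%nat -> delta0 < d (Nat.iter n f x) (Nat.iter n f y).
Proof.
  intros Hxy.
  destruct (geometric_eventually_lt (delta0 / (1 - L)) L (d x y) ltac:(lra)
              (dist_pos d hd x y Hxy)) as [N HN].
  exists N. intros n Hn. apply Rnot_le_lt. intro Hclose.
  pose proof (dist_le_of_iter_close n x y delta0 ltac:(lra) Hclose).
  specialize (HN n Hn). lra.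
Qed.

Lemma NoDup_length_le_cover (l : list X) (c : X -> X) :
  (forall x, In (c x) l /\ d (c x) x < delta0 / 2) ->
  forall s : list X, NoDup s -> (length s <= length l)%nat.
Proof.
  intros Hc s Hs.
  destruct (eventually_forall_in (fun x n => forall y, In y s -> x <> y ->
              delta0 < d (Nat.iter n f x) (Nat.iter n f y)) s) as [N HN].
  { intros x _. apply eventually_forall_in. intros y _.
    destruct (classic (x = y)) as [<- | Hxy].
    - exists 0%nat. intros n _ Hxx. contradiction.
    - destruct (iter_dist_eventually_gt x y Hxy) as [N HN].
      exists N. intros n Hn _. exact (HN n Hn). }
  rewrite <- (length_map (fun x => c (Nat.iter N f x)) s).
  apply NoDup_incl_length.
  - apply NoDup_map_NoDup_ForallPairs; [| exact Hs].
    intros x y Hx Hy Hcxy. apply NNPP. intro Hxy.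
    pose proof (HN N (le_n N) x Hx y Hy Hxy) as Hfar.
    destruct (Hc (Nat.iter N f x)) as [_ Hcx], (Hc (Nat.iter N f y)) as [_ Hcy].
    rewrite Hcxy in Hcx.
    pose proof (metric_triangle d hd (Nat.iter N f x) (c (Nat.iter N f y)) (Nat.iter N f y))
      as Htri.
    rewrite (metric_sym d hd (Nat.iter N f x) (c _)) in Htri. lra.
  - intros p Hp. apply in_map_iff in Hp as [x [<- _]]. apply Hc.
Qed.

End ContractiveShadowing.

Lemma finite_of_NoDup_length_le {X : Type} (n : nat) :
  (forall s : list X, NoDup s -> (length s <= n)%nat) -> finite_type X.
Proof.
  intros Hbound. apply NNPP. intro Hinf.
  assert (Hlong : forall k, exists s : list X, NoDup s /\ length s = k).
  { induction k as [| k [s [Hs Hlen]]].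
    - exists nil. split; [constructor | reflexivity].
    - destruct (not_all_ex_not _ _ (fun Hall => Hinf (ex_intro _ s Hall))) as [x Hx].
      exists (x :: s). split; [constructor; assumption | simpl; lia]. }
  destruct (Hlong (S n)) as [s [Hs Hlen]].
  specialize (Hbound s Hs). lia.
Qed.

Theorem theorem1p4 (X : Type) (d : X -> X -> R) (f : X -> X) :
  is_metric d -> metric_compact d -> homeomorphism d f ->
  contractive_shadowing d f -> finite_type X.
Proof.
  intros hd hcpt [hf [g [hgf _]]] [L [hL0 [hL1 [delta0 [hdelta0 hsh]]]]].
  assert (hinj : forall a b, f a = f b -> a = b).
  { intros a b Hab. rewrite <- (hgf a), <- (hgf b), Hab. reflexivity. }
  destruct (compact_ball_cover d hd hcpt (delta0 / 2)) as [l [c Hc]]; [lra |].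
  apply (finite_of_NoDup_length_le (length l)).
  exact (NoDup_length_le_cover d f L delta0 hd hcpt hf hinj (conj hL0 hL1) hdelta0 hsh l c Hc).
Qed.
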